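(* Let $\{s_k\}_{k\ge0}$ be a strictly positive sequence and let $(L,\omega,\upsilon)$ be the corresponding Krein--Langer string with coefficients $l_j,\omega_j,\upsilon_j$ ($j\ge0$) given by $l_j = \frac{\Delta_{1,k(j)}^2}{\Delta_{0,k(j)-1}\Delta_{0,k(j)}}$; $\omega_j=\frac{\Delta_{0,k(j)}^2}{\Delta_{1,k(j)}\Delta_{1,k(j)+1}}$, $\upsilon_j=0$ if $k(j+1)-k(j)=1$; $\omega_j=\frac{\Delta_{-1,k(j)}}{\Delta_{1,k(j)}}-\frac{\Delta_{-1,k(j+1)}}{\Delta_{1,k(j+1)}}$, $\upsilon_j=\frac{\Delta_{-1,k(j)+1}^2}{\Delta_{0,k(j)}\Delta_{0,k(j)+1}}$ if $k(j+1)-k(j)=2$. Let $\{P_n\}_{n\ge0}$ and $\{Q_n\}_{n\ge0}$ be the associated polynomials of the first and second kind. Then for all $j\ge0$, $$l_j=|P_{k(j)}(0)|^2,\qquad \omega_j=\frac{Q_{k(j)}(0)}{P_{k(j)}(0)}-\frac{Q_{k(j+1)}(0)}{P_{k(j+1)}(0)},$$ and $$\upsilon_j=\begin{cases}0,& k(j+1)-k(j)=1,\\ |Q_{k(j)+1}(0)|^2,& k(j+1)-k(j)=2.\end{cases}$$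
   Context: A real sequence $\{s_k\}_{k\ge0}$ is strictly positive if $\Delta_{0,n}:=\det(s_{i+j})_{i,j=0}^{n}>0$ for all $n\ge0$; $\Delta_{0,-1}:=1$. $\Delta_{1,0}:=1$, $\Delta_{1,n}:=\det(s_{i+j+1})_{i,j=0}^{n-1}$ ($n\ge1$); $\Delta_{-1,0}:=0$, $\Delta_{-1,n}:=\det(s_{i+j-1})_{i,j=0}^{n}$ with $s_{-1}:=0$ ($n\ge1$). For $j\ge0$, $k(j)$ is the largest integer $k\ge0$ such that exactly $j$ of $\Delta_{1,0},\dots,\Delta_{1,k-1}$ are nonzero. Polynomials of the first kind: $P_0:=1/\sqrt{s_0}$ and, for $n\ge1$, $P_n(z):=\frac{1}{\sqrt{\Delta_{0,n-1}\Delta_{0,n}}}\det M_n(z)$, where $M_n(z)$ is the $(n+1)\times(n+1)$ matrix whose first $n$ rows are $(s_i,s_{i+1},\dots,s_{i+n})$, $i=0,\dots,n-1$, and whose last row is $(1,z,\dots,z^n)$. Polynomials of the second kind: $Q_0:=0$ and $Q_n(z):=\int_{\mathbb R}\frac{P_n(\lambda)-P_n(z)}{\lambda-z}\rho(d\lambda)$ for $n\ge1$, where $\rho$ is any positive Borel measure on $\mathbb R$ with $\int\lambda^k\rho(d\lambda)=s_k$ for all $k$ (this does not depend on the choice of $\rho$). *)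

(* Real numbers are modelled by an arbitrary real closed field
   R : rcfType (needed for Num.sqrt); this contains the case of the reals. *)
From HB Require Import structures.
From mathcomp Require Import all_boot all_order all_algebra.
Set Implicit Arguments. Unset Strict Implicit. Unset Printing Implicit Defensive.
Import Order.TTheory GRing.Theory Num.Theory.
Local Open Scope ring_scope.

Section KreinLanger.
Variable R : rcfType.
Implicit Types (s t : nat -> R).

Definition hankel t (m : nat) : 'M[R]_m := \matrix_(i < m, j < m) t (i + j)%N.

Definition Delta0 s (n : nat) : R := \det (hankel s n.+1).

(* Delta_{0,k-1}, with the convention Delta_{0,-1} = 1 *)
Definition Delta0pred s (k : nat) : R :=
  if k is k'.+1 then Delta0 s k' else 1.

Definition Delta1 s (n : nat) : R :=
  if n is 0 then 1 else \det (hankel (fun k => s k.+1) n).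

(* s shifted: (s_{k-1})_k with s_{-1} := 0 *)
Definition sminus1 s (k : nat) : R := if k is k'.+1 then s k' else 0.

Definition Deltam1 s (n : nat) : R :=
  if n is 0 then 0 else \det (hankel (sminus1 s) n.+1).

Definition strictly_positive s : Prop := forall n : nat, 0 < Delta0 s n.

Definition count_nz1 s (k : nat) : nat :=
  count (fun i => Delta1 s i != 0) (iota 0 k).

Definition is_kidx s (j k : nat) : Prop :=
  count_nz1 s k = j /\ (forall k' : nat, count_nz1 s k' = j -> (k' <= k)%N).

Definition Mmat s (n : nat) : 'M[{poly R}]_n.+1 :=
  \matrix_(i < n.+1, j < n.+1)
     (if (i < n)%N then (s (i + j)%N)%:P else 'X^j).

Definition Ppoly s (n : nat) : {poly R} :=
  if n is 0 then (Num.sqrt (s 0%N))^-1 %:P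
  else (Num.sqrt (Delta0pred s n * Delta0 s n))^-1 *: \det (Mmat s n).

(* the moment functional: p |-> int p drho = sum_m p_m s_m
   (for any measure rho with moments s_k) *)
Definition moment s (p : {poly R}) : R := \sum_(m < size p) p`_m * s m.

(* polynomials of the second kind:
   Q_n(z) = int (P_n(l) - P_n(z)) / (l - z) rho(dl)  (Q_0 = 0) *)
Definition Qn s (n : nat) (z : R) : R :=
  if n is 0 then 0
  else moment s ((Ppoly s n - ((Ppoly s n).[z])%:P) %/ ('X - z%:P)).

(* Krein--Langer string coefficients, given kj = k(j), kj1 = k(j+1) *)
Definition KL_l s (kj : nat) : R :=
  Delta1 s kj ^+ 2 / (Delta0pred s kj * Delta0 s kj).

Definition KL_omega s (kj kj1 : nat) : R :=
  if (kj1 - kj == 1)%N then Delta0 s kj ^+ 2 / (Delta1 s kj * Delta1 s kj.+1)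
  else
    Deltam1 s kj / Delta1 s kj - Deltam1 s kj1 / Delta1 s kj1.

Definition KL_upsilon s (kj kj1 : nat) : R :=
  if (kj1 - kj == 1)%N then 0
  else
    Deltam1 s kj.+1 ^+ 2 / (Delta0 s kj * Delta0 s kj.+1).

End KreinLanger.

From HB Require Import structures.
From mathcomp Require Import all_boot all_order all_algebra perm.
From mathcomp Require Import zify ring.
Set Implicit Arguments. Unset Strict Implicit. Unset Printing Implicit Defensive.
Import Order.TTheory GRing.Theory Num.Theory.
Local Open Scope ring_scope.

(* Up to the common factor (-1)^n / sqrt (Delta_{0,n-1} Delta_{0,n}), both values
   at 0 are cofactor expansions: P_n(0) is the coefficient of z^0 in det M_n(z),
   i.e. the cofactor (-1)^n Delta_{1,n}, and Q_n(0), which is the moment functional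
   of the shifted sequence (s_{k-1}) applied to P_n, is the expansion of
   Delta_{-1,n} along its first row.  This gives l_j and upsilon_j, and
   Q_k(0) / P_k(0) = Delta_{-1,k} / Delta_{1,k}.  When k(j+1) = k(j) + 1 the
   formula for omega_j is then the Desnanot-Jacobi identity
   Delta_{0,k}^2 = Delta_{-1,k} Delta_{1,k+1} - Delta_{-1,k+1} Delta_{1,k}
   for the Hankel array (s_{i+j-1}); it follows from a Schur complement with
   respect to the interior block, of determinant Delta_{1,k} <> 0 as k = k(j). *)

Section Determinants.
Variable R : comNzRingType.

Lemma det_rowsub_perm n (p : 'S_n) (A : 'M[R]_n) :
  \det (mxsub p id A) = (-1) ^+ p * \det A.
Proof.
have -> : mxsub p id A = row_perm p A by apply/matrixP => i j; rewrite !mxE.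
by rewrite row_permE det_mulmx det_perm.
Qed.

Lemma det_colsub_perm n (p : 'S_n) (A : 'M[R]_n) :
  \det (mxsub id p A) = (-1) ^+ p * \det A.
Proof.
have -> : mxsub id p A = col_perm p A by apply/matrixP => i j; rewrite !mxE.
by rewrite col_permE det_mulmx det_perm odd_permV mulrC.
Qed.

Lemma det_mxsub_perm n (p : 'S_n) (A : 'M[R]_n) : \det (mxsub p p A) = \det A.
Proof.
have -> : mxsub p p A = mxsub p id (mxsub id p A) by apply/matrixP => i j; rewrite !mxE.
by rewrite det_rowsub_perm det_colsub_perm mulrA -expr2 sqrr_sign mul1r.
Qed.

Lemma det_mx22 (A : 'M[R]_2) : \det A = A 0 0 * A 1 1 - A 0 1 * A 1 0.
Proof.
rewrite (expand_det_row _ ord0) !big_ord_recl big_ord0 addr0 /cofactor !det_mx11 !mxE /=.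
have -> : lift ord0 (ord0 : 'I_1) = 1 :> 'I_2 by apply: val_inj.
have -> : lift 1 (ord0 : 'I_1) = 0 :> 'I_2 by apply: val_inj.
have -> : ord0 = 0 :> 'I_2 by apply: val_inj.
by rewrite expr0 expr1 mul1r mulN1r mulrN.
Qed.

End Determinants.

Section DesnanotJacobi.
Variable F : fieldType.

Lemma det_block_mx_schur m n (A : 'M[F]_m) (C : 'M[F]_(m, n)) (B : 'M[F]_(n, m))
    (D : 'M[F]_n) :
  D \in unitmx -> \det (block_mx A C B D) = \det (A - C *m invmx D *m B) * \det D.
Proof.
move=> unitD.
have -> : block_mx A C B D =
    block_mx 1%:M (C *m invmx D) 0 1%:M *m block_mx (A - C *m invmx D *m B) 0 B D.
  by rewrite mulmx_block !mul1mx !mul0mx ?mulmx0 ?addr0 ?add0r mulmxKV // subrK.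
by rewrite det_mulmx det_ublock det_lblock !det1 !mul1r.
Qed.

Definition border_mx k (M : 'M[F]_(2 + k)) (i j : 'I_2) : 'M[F]_(1 + k) :=
  block_mx (ulsubmx M i j)%:M (row i (ursubmx M)) (col j (dlsubmx M)) (drsubmx M).

Lemma desnanot_jacobi_border k (M : 'M[F]_(2 + k)) : \det (drsubmx M) != 0 ->
  \det M * \det (drsubmx M) =
  \det (border_mx M 0 0) * \det (border_mx M 1 1)
  - \det (border_mx M 0 1) * \det (border_mx M 1 0).
Proof.
move=> nzD; have unitD : drsubmx M \in unitmx by rewrite unitmxE unitfE.
set D := drsubmx M.
set S := ulsubmx M - ursubmx M *m invmx D *m dlsubmx M.
have detM : \det M = \det S * \det D by rewrite -{1}[M]submxK det_block_mx_schur.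
have det_border i j : \det (border_mx M i j) = S i j * \det D.
  rewrite det_block_mx_schur // det_mx11 -row_mul !mxE eqxx mulr1n.
  by congr ((_ - _) * _); apply: eq_bigr => l _; rewrite !mxE.
rewrite detM !det_border det_mx22; ring.
Qed.

Lemma border_mxE k (g : nat -> nat -> F) (i j : 'I_2) :
  border_mx (\matrix_(a < 2 + k, b < 2 + k) g a b) i j =
  \matrix_(a < 1 + k, b < 1 + k)
    g (if a == 0 :> nat then val i else a.+1) (if b == 0 :> nat then val j else b.+1).
Proof.
apply/matrixP => a b; rewrite /border_mx !mxE.
case: (splitP a) => [a1 ->|a1 ->]; rewrite !mxE;
  case: (splitP b) => [b1 ->|b1 ->]; rewrite !mxE /=.
all: by rewrite ?(ord1 a1) ?(ord1 b1) /= ?mulr1n.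
Qed.

Definition window_mx (f : nat -> nat -> F) (a b m : nat) : 'M[F]_m :=
  \matrix_(i < m, j < m) f (a + i)%N (b + j)%N.

Lemma desnanot_jacobi (f : nat -> nat -> F) k : \det (window_mx f 1 1 k) != 0 ->
  \det (window_mx f 0 0 k.+2) * \det (window_mx f 1 1 k) =
  \det (window_mx f 0 0 k.+1) * \det (window_mx f 1 1 k.+1)
  - \det (window_mx f 0 1 k.+1) * \det (window_mx f 1 0 k.+1).
Proof.
(* Reorder the indices of the (k+2)-window cyclically as k+1, 0, 1, ..., k: the
   two border indices come first and the four bordered minors become the four
   (k+1)-windows, two of them up to one-sided cyclic reorderings whose signs
   cancel in the product. *)
move=> nz.
pose cyc n (x : nat) := if x == 0 then n else x.-1.
pose rot n := perm (@ord_pred_inj n.+1).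
have val_rot n (x : 'I_n.+1) : val (rot n x) = cyc n x.
  rewrite permE /= /cyc; case: x => -[|x] lt_x /=; first by rewrite modn_small.
  by rewrite modnDr modn_small // ltnW.
pose M : 'M[F]_(2 + k) := \matrix_(a, b) f (cyc k.+1 a) (cyc k.+1 b).
have detM : \det M = \det (window_mx f 0 0 k.+2).
  rewrite -[RHS](det_mxsub_perm (rot k.+1)); congr (\det _); apply/matrixP => a b.
  by rewrite !mxE !val_rot.
have eD : drsubmx M = window_mx f 1 1 k by apply/matrixP => a b; rewrite !mxE.
rewrite -detM -eD desnanot_jacobi_border ?eD // /M.
rewrite !(@border_mxE k (fun a b => f (cyc k.+1 a) (cyc k.+1 b))) /=.
rewrite [\det (window_mx f 0 0 _) * _]mulrC [\det (window_mx f 0 1 _) * _]mulrC.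
rewrite -(det_mxsub_perm (rot k) (window_mx f 1 1 k.+1)).
have -> : \det (window_mx f 1 0 k.+1) * \det (window_mx f 0 1 k.+1) =
    \det (mxsub (rot k) id (window_mx f 1 0 k.+1)) *
    \det (mxsub id (rot k) (window_mx f 0 1 k.+1)).
  by rewrite det_rowsub_perm det_colsub_perm mulrACA -expr2 sqrr_sign mul1r.
by congr (_ * _ - _ * _); congr (\det _); apply/matrixP => a b;
  rewrite !mxE ?val_rot /cyc; case: (val a); case: (val b).
Qed.

End DesnanotJacobi.

Lemma divp_subhorner0 (F : fieldType) (p : {poly F}) :
  (p - (p.[0])%:P) %/ ('X - 0%:P) = drop_poly 1 p.
Proof.
have take1 : take_poly 1 p = (p`_0)%:P.
  by apply/polyP => -[|i]; rewrite coef_take_poly coefC.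
rewrite subr0 horner_coef0 -{1}(poly_take_drop 1 p) take1 addrAC subrr add0r expr1.
by rewrite mulpK ?polyX_eq0.
Qed.

Section Moments.
Variables (R : rcfType) (t : nat -> R).

Lemma moment_poly n (c : nat -> R) :
  moment t (\poly_(j < n) c j) = \sum_(j < n) c j * t j.
Proof.
rewrite /moment (big_ord_widen n (fun j => (\poly_(j < n) c j)`_j * t j) (size_poly n c)).
rewrite big_mkcond /=; apply: eq_bigr => j _; case: ifP => [_|/negbT].
  by rewrite coef_poly ltn_ord.
by rewrite -leqNgt => /(nth_default 0); rewrite coef_poly ltn_ord => ->; rewrite mul0r.
Qed.

Lemma moment_drop_poly1 (p : {poly R}) :
  moment t (drop_poly 1 p) = moment (sminus1 t) p.
Proof.
rewrite /moment size_drop_poly; case: (size p) => [|n]; first by rewrite !big_ord0.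
rewrite big_ord_recl /= mulr0 add0r subn1 /=.
by apply: eq_bigr => i _; rewrite coef_drop_poly addn1.
Qed.

End Moments.

Section KreinLangerString.
Variables (R : rcfType) (s : nat -> R).

Lemma Delta1E n : Delta1 s n = \det (hankel (fun m => s m.+1) n).
Proof. by case: n => [|n] //=; rewrite det_mx00. Qed.

Lemma Deltam1E n : Deltam1 s n = \det (hankel (sminus1 s) n.+1).
Proof. by case: n => [|n] //=; rewrite det_mx11 !mxE. Qed.

Lemma Delta0_sqr k : Delta1 s k != 0 ->
  Delta0 s k ^+ 2 = Deltam1 s k * Delta1 s k.+1 - Deltam1 s k.+1 * Delta1 s k.
Proof.
pose f i j := sminus1 s (i + j).
have W00 m : window_mx f 0 0 m = hankel (sminus1 s) m.
  by apply/matrixP => i j; rewrite !mxE /f !add0n.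
have W11 m : window_mx f 1 1 m = hankel (fun m => s m.+1) m.
  by apply/matrixP => i j; rewrite !mxE /f !add1n addSn addnS.
have W01 m : window_mx f 0 1 m = hankel s m.
  by apply/matrixP => i j; rewrite !mxE /f !add0n add1n addnS.
have W10 m : window_mx f 1 0 m = hankel s m.
  by apply/matrixP => i j; rewrite !mxE /f !add0n add1n addSn.
move=> nz; have := @desnanot_jacobi _ f k.
rewrite !W00 W01 W10 !W11 -!Delta1E -!Deltam1E => /(_ nz) ->.
by rewrite /Delta0; ring.
Qed.

Lemma kidx_Delta1_neq0 j k : is_kidx s j k -> Delta1 s k != 0.
Proof.
case=> count_k max_k; apply/negP => /eqP Delta1_k0.
suff /max_k : count_nz1 s k.+1 = j by rewrite ltnn.
by move: count_k; rewrite /count_nz1 -addn1 iotaD count_cat /= Delta1_k0 eqxx /= => <-; lia.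
Qed.

Lemma KL_omegaE kj kj1 :
  Delta1 s kj != 0 -> Delta1 s kj1 != 0 ->
  KL_omega s kj kj1 = Deltam1 s kj / Delta1 s kj - Deltam1 s kj1 / Delta1 s kj1.
Proof.
move=> nz nz1; rewrite /KL_omega; case: eqP => // adjacent.
have kj1E : kj1 = kj.+1 by lia.
by rewrite kj1E Delta0_sqr //; field; rewrite nz -kj1E nz1.
Qed.

Definition Mcofactor n j : R :=
  (-1) ^+ (n + j) * \det (\matrix_(i < n, b < n) s (i + bump j b)%N).

Lemma det_Mmat n : \det (Mmat s n) = \poly_(j < n.+1) Mcofactor n j.
Proof.
rewrite (expand_det_row _ ord_max) poly_def; apply: eq_bigr => j _.
rewrite mxE ltnn mulrC -mul_polyC /cofactor rmorphM rmorph_sign -det_map_mx.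
congr (_ * \det _ * _); apply/matrixP => i b.
by rewrite !mxE lift_max ltn_ord.
Qed.

Lemma Mcofactor0 n : Mcofactor n 0 = (-1) ^+ n * Delta1 s n.
Proof.
rewrite /Mcofactor addn0 Delta1E; congr (_ * \det _); apply/matrixP => i b.
by rewrite !mxE /bump leq0n addnS.
Qed.

Lemma Mcofactor_sminus1 n :
  \sum_(j < n.+1) Mcofactor n j * sminus1 s j = (-1) ^+ n * Deltam1 s n.
Proof.
rewrite Deltam1E (expand_det_row _ ord0) mulr_sumr; apply: eq_bigr => j _.
rewrite /Mcofactor /cofactor mxE.
have -> : row' ord0 (col' j (hankel (sminus1 s) n.+1)) =
    \matrix_(i < n, b < n) s (i + bump j b)%N by apply/matrixP => i b; rewrite !mxE.
by rewrite exprD; ring.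
Qed.

Definition Pnorm n : R := Num.sqrt (Delta0pred s n * Delta0 s n).

Lemma Ppoly_expand n : Ppoly s n = (Pnorm n)^-1 *: \poly_(j < n.+1) Mcofactor n j.
Proof.
case: n => [|n]; last by rewrite /= det_Mmat.
rewrite /Pnorm /= /Delta0 det_mx11 mxE mul1r; apply/polyP => -[|i].
  by rewrite coefZ coef_poly coefC /Mcofactor det_mx00 addn0 expr0 /= !mulr1.
by rewrite coefZ coef_poly coefC /= mulr0.
Qed.

Lemma Ppoly_at0 n : (Ppoly s n).[0] = (Pnorm n)^-1 * ((-1) ^+ n * Delta1 s n).
Proof. by rewrite Ppoly_expand hornerZ horner_coef0 coef_poly Mcofactor0. Qed.

Lemma Qn_at0 n : Qn s n 0 = (Pnorm n)^-1 * ((-1) ^+ n * Deltam1 s n).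
Proof.
case: n => [|n]; first by rewrite /= !mulr0.
rewrite /Qn divp_subhorner0 moment_drop_poly1 Ppoly_expand.
have -> : (Pnorm n.+1)^-1 *: \poly_(j < n.+2) Mcofactor n.+1 j =
    \poly_(j < n.+2) ((Pnorm n.+1)^-1 * Mcofactor n.+1 j).
  by apply/polyP => i; rewrite coefZ !coef_poly; case: ifP; rewrite ?mulr0.
rewrite moment_poly -Mcofactor_sminus1 mulr_sumr.
by apply: eq_bigr => j _; rewrite -mulrA.
Qed.

Hypothesis s_pos : strictly_positive s.

Lemma Delta0pred_Delta0_gt0 n : 0 < Delta0pred s n * Delta0 s n.
Proof. by apply: mulr_gt0 => //; case: n => [|n] //=; rewrite ltr01. Qed.

Lemma Pnorm_neq0 n : Pnorm n != 0.
Proof. by rewrite gt_eqF // sqrtr_gt0 Delta0pred_Delta0_gt0. Qed.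

Lemma Pnorm_sqr n : Pnorm n ^+ 2 = Delta0pred s n * Delta0 s n.
Proof. by rewrite sqr_sqrtr // ltW // Delta0pred_Delta0_gt0. Qed.

Lemma Ppoly_at0_sqr n :
  (Ppoly s n).[0] ^+ 2 = Delta1 s n ^+ 2 / (Delta0pred s n * Delta0 s n).
Proof. by rewrite Ppoly_at0 !exprMn sqrr_sign mul1r exprVn Pnorm_sqr mulrC. Qed.

Lemma Qn_at0_sqr n :
  Qn s n 0 ^+ 2 = Deltam1 s n ^+ 2 / (Delta0pred s n * Delta0 s n).
Proof. by rewrite Qn_at0 !exprMn sqrr_sign mul1r exprVn Pnorm_sqr mulrC. Qed.

Lemma Qn_div_Ppoly_at0 n : Qn s n 0 / (Ppoly s n).[0] = Deltam1 s n / Delta1 s n.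
Proof.
have [D0|nz] := eqVneq (Delta1 s n) 0; first by rewrite Ppoly_at0 D0 !(mulr0, invr0).
rewrite Qn_at0 Ppoly_at0; field.
by rewrite nz Pnorm_neq0 signr_eq0.
Qed.

End KreinLangerString.

Theorem corollary5p4 (R : rcfType) (s : nat -> R)
  (Hs : strictly_positive s) (j kj kj1 : nat)
  (Hkj : is_kidx s j kj) (Hkj1 : is_kidx s j.+1 kj1) :
  KL_l s kj = `|(Ppoly s kj).[0]| ^+ 2 /\
  KL_omega s kj kj1 = Qn s kj 0 / (Ppoly s kj).[0] - Qn s kj1 0 / (Ppoly s kj1).[0] /\
  ((kj1 - kj)%N = 1%N -> KL_upsilon s kj kj1 = 0) /\
  ((kj1 - kj)%N = 2%N -> KL_upsilon s kj kj1 = `|Qn s kj.+1 0| ^+ 2).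
Proof.
have nz_kj := kidx_Delta1_neq0 Hkj; have nz_kj1 := kidx_Delta1_neq0 Hkj1.
split; first by rewrite real_normK ?num_real // Ppoly_at0_sqr.
split; first by rewrite !Qn_div_Ppoly_at0 // KL_omegaE.
split; first by move=> gap1; rewrite /KL_upsilon gap1.
by move=> gap2; rewrite /KL_upsilon gap2 real_normK ?num_real // Qn_at0_sqr.
Qed.
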